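(* Let $p=2$ and $n\geq 1$. The $E_2$-term $E_2^{*,*,*}S(n,n)$ of the May spectral sequence for $S(n,n)$ is isomorphic to the tensor product of $E[h_{s,j}\mid n<s<2n,\ j\in\mathbb{Z}/n]$ and $E[h_{n,j},\rho_{2n}\mid j\in\mathbb{Z}/n]\otimes P[h_{n,n-1}]$, where $\rho_{2n}=\sum_{0\leq j<n}h_{2n,j}$ and $h_{n,j}^2=h_{n,n-1}^2$.
   Context: At $p=2$, $S(n,n)=\mathbb{Z}/2[t_n,t_{n+1},\dots]/(t_s^{2^n}-t_s)$ is the Hopf algebra with coproduct $\Delta(t_s)=1\otimes t_s+\sum_{n\leq i\leq s-n}t_i\otimes t_{s-i}^{2^i}+t_s\otimes1$ for $s\leq 2n-1$ and the same minus $t_{s-n}^{2^{n-1}}\otimes t_{s-n}^{2^{n-1}}$ for $s\geq 2n$. May filtration: $M(t_s^{2^j})=2s-1$ for $n\le s\le 2n-1$, $M(t_s^{2^j})=\max\{2s-1,2M(t_{s-n}^{2^{j+n-1}})+1\}$ for $s\ge 2n$, extended to monomials by $M(t_s^{\sum j_i2^i})=\sum j_iM(t_s^{2^i})$ and additively over distinct $t_s$, and to cobar elements by $M([\alpha_1|\cdots|\alpha_s])=\sum M(\alpha_i)$; the resulting May spectral sequence $E_r^{s,t,M}S(n,n)$ converges to $\mathrm{Ext}_{S(n,n)}(\mathbb{Z}/2,\mathbb{Z}/2)$, and $h_{i,j}$ ($i\ge n$, $j\in\mathbb{Z}/n$) denotes the class in $E_1$ of $[t_i^{2^j}]$. Its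 $E_2$-term is the cohomology of $P[h_{n,j}\mid j\in\mathbb{Z}/n]\otimes E[h_{s,j}\mid n<s\leq 2n,\ j\in\mathbb{Z}/n]$ with the only nontrivial differentials on generators $d_1(h_{2n,j})=h_{n,j-1}^2+h_{n,j}^2$. *)

From HB Require Import structures.
From mathcomp Require Import all_boot all_order all_algebra.
From mathcomp Require Import mpoly.
Set Implicit Arguments. Unset Strict Implicit. Unset Printing Implicit Defensive.
Import GRing.Theory.
Local Open Scope ring_scope.

Notation F2poly k := {mpoly 'F_2[k]}.

(* The i-th variable of F_2[X_0..X_{k-1}] (0 if i >= k; never used out of range). *)
Definition Xv (k i : nat) : F2poly k :=
  match (insub i : option 'I_k) with Some o => 'X_o | None => 0 end.

Definition in_ideal (k : nat) (gs : seq (F2poly k)) (a : F2poly k) : Prop :=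
  exists cs : seq (F2poly k), size cs = size gs /\
    a = \sum_(i < size gs) cs`_i * gs`_i.

(* Since the characteristic is 2, the exterior algebra is F_2[h]/(h^2); we model
   E_1 as the polynomial ring in the (n+1)*n variables h_{n+o,j}
   (0 <= o <= n, 0 <= j < n; variable index o*n + j) modulo the ideal IA
   generated by the squares h_{n+o,j}^2 with 1 <= o <= n. *)
Definition kA (n : nat) := (n.+1 * n)%N.

Definition hA (n o j : nat) : F2poly (kA n) := Xv (kA n) (o * n + j).

Definition IA_gens (n : nat) : seq (F2poly (kA n)) :=
  [seq hA n o j ^+ 2 | o <- iota 1 n, j <- iota 0 n].

Definition inIA (n : nat) (a : F2poly (kA n)) : Prop := in_ideal (IA_gens n) a.

(* The d_1-differential: the derivation with d_1(h_{2n,j}) = h_{n,j-1}^2 + h_{n,j}^2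
   (j-1 taken in Z/n) and d_1 = 0 on all other generators.  The variable h_{2n,j}
   has index n*n + j. It preserves the ideal IA, hence descends to E_1. *)
Definition dA (n : nat) (p : F2poly (kA n)) : F2poly (kA n) :=
  \sum_(i < kA n | (n * n <= i)%N)
     mderiv i p * (hA n 0 ((i - n * n + n).-1 %% n) ^+ 2 + hA n 0 (i - n * n) ^+ 2).

Definition cycleA (n : nat) (a : F2poly (kA n)) : Prop := inIA (dA a).
Definition boundaryA (n : nat) (a : F2poly (kA n)) : Prop :=
  exists b : F2poly (kA n), inIA (a - dA b).

Definition rhoA (n : nat) : F2poly (kA n) := \sum_(j < n) hA n n j.

(* ---------------- The target algebra C ----------------
   C = E[h_{s,j} | n < s < 2n, j in Z/n] (x) E[h_{n,j}, rho | j in Z/n] (x) P[h_{n,n-1}]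
   with the relations h_{n,j}^2 = h_{n,n-1}^2.
   Modelled as the polynomial ring in n*n + 1 variables: c_{n+o,j} (0 <= o < n,
   0 <= j < n, index o*n + j) and r (index n*n), modulo the ideal JC generated by
   c_{n+o,j}^2 (1 <= o < n), r^2 and c_{n,j}^2 - c_{n,n-1}^2. *)
Definition kC (n : nat) := (n * n).+1.

Definition hC (n o j : nat) : F2poly (kC n) := Xv (kC n) (o * n + j).
Definition rhoC (n : nat) : F2poly (kC n) := Xv (kC n) (n * n).

Definition JC_gens (n : nat) : seq (F2poly (kC n)) :=
  [seq hC n o j ^+ 2 | o <- iota 1 n.-1, j <- iota 0 n]
  ++ [:: rhoC n ^+ 2]
  ++ [seq hC n 0 j ^+ 2 - hC n 0 n.-1 ^+ 2 | j <- iota 0 n].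

Definition inJC (n : nat) (c : F2poly (kC n)) : Prop := in_ideal (JC_gens n) c.

Definition psi_images (n : nat) : (kC n).-tuple (F2poly (kA n)) :=
  [tuple (if (i < n * n)%N then hA n (i %/ n) (i %% n) else rhoA n) | i < kC n].

Definition psi (n : nat) (c : F2poly (kC n)) : F2poly (kA n) :=
  comp_mpoly (psi_images n) c.

(* In characteristic 2 the E_1-term is a polynomial ring modulo the ideal IA of
   squares of the exterior generators, and d_1 is a derivation.  In the coordinates
   y_0 = h_{n,n-1}, y_i = h_{n,i-1} + h_{n,i} (0 < i < n), z_0 = rho_{2n} and
   z_j = h_{2n,j} (0 < j < n) it becomes the Koszul-type derivation z_j |-> y_j^2,
   z_0 |-> 0.  Since y_1^2, ..., y_{n-1}^2 is a regular sequence modulo the squares of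
   the other exterior generators, induction on the largest z_j that occurs shows that
   every cycle is homologous to a polynomial free of z_1, ..., z_{n-1}, i.e. to an
   image of C.  Conversely, the retraction of psi killing h_{2n,j} (j > 0) maps IA and
   all boundaries into JC, while the relations of C are boundaries:
   h_{n,j}^2 - h_{n,n-1}^2 = d_1(h_{2n,j+1} + ... + h_{2n,n-1}). *)

From HB Require Import structures.
From mathcomp Require Import all_boot all_order all_algebra.
From mathcomp Require Import mpoly.
From mathcomp Require Import ring zify.
Import GRing.Theory.
Local Open Scope ring_scope.
Set Implicit Arguments. Unset Strict Implicit.

(** * Monomial spans and restricted variables *)

Section MonomialSpans.
Variables (R : comNzRingType) (k : nat).
Implicit Types (p q r : {mpoly R[k]}) (m : 'X_{1..k}) (P : pred 'X_{1..k}).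

Definition mono_span P : {pred {mpoly R[k]}} := fun p => all P (msupp p).

Lemma mono_spanP P p : reflect (forall m, ~~ P m -> p@_m = 0) (p \in mono_span P).
Proof.
apply: (iffP allP) => [hP m|h m]; first by apply: contraNeq => nz; apply: hP; rewrite mcoeff_msupp.
by rewrite mcoeff_msupp; apply: contraR => /h ->; rewrite eqxx.
Qed.

Fact mono_span_zmod_closed P : zmod_closed (mono_span P).
Proof.
split=> [|p q /mono_spanP hp /mono_spanP hq]; apply/mono_spanP => m hm.
  by rewrite mcoeff0.
by rewrite mcoeffB hp ?hq ?subr0.
Qed.

HB.instance Definition _ P :=
  GRing.isZmodClosed.Build {mpoly R[k]} (mono_span P) (mono_span_zmod_closed P).

Lemma mono_spanX P m : P m -> 'X_[m] \in mono_span P.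
Proof. by move=> hm; rewrite /mono_span unfold_in /= msuppX /= hm. Qed.

Lemma mono_span_sub P P' : {subset P <= P'} -> {subset mono_span P <= mono_span P'}.
Proof. by move=> sPP' p; rewrite !unfold_in; apply: sub_all. Qed.

Definition upclosed P := forall m m', P m -> P (m + m')%MM.

Lemma mono_spanMr P p q : upclosed P -> p \in mono_span P -> p * q \in mono_span P.
Proof.
move=> upP /mono_spanP hp; apply/mono_spanP => m hm.
rewrite mcoeffM big1 // => -[m1 m2] /= /eqP Em.
by rewrite hp ?mul0r //; apply: contra hm => /(upP _ m2); rewrite -Em.
Qed.

Lemma mono_spanMl P p q : upclosed P -> p \in mono_span P -> q * p \in mono_span P.
Proof. by rewrite mulrC; apply: mono_spanMr. Qed.

Definition has_sq (Q : pred 'I_k) : pred 'X_{1..k} :=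
  fun m => [exists i, Q i && (1 < m i)%N].

Local Notation sq_ideal Q := (mono_span (has_sq Q)).

Section SquareIdeals.
Variable Q : pred 'I_k.

Lemma has_sq_upclosed : upclosed (has_sq Q).
Proof.
move=> m m' /existsP [i /andP [qi hi]]; apply/existsP; exists i.
by rewrite qi mnmDE (leq_trans hi) ?leq_addr.
Qed.

Lemma has_sq_addU m j : m j = 0%N -> has_sq Q (m + U_(j))%MM = has_sq Q m.
Proof.
move=> mj0; apply/existsP/existsP => -[i /andP [qi hi]]; exists i; rewrite qi /=;
  move: hi; rewrite mnmDE mnm1E; case: eqP => [<-|]; rewrite ?mj0 ?addn0 //.
Qed.

Lemma has_sq_addU2 m j : ~~ Q j -> has_sq Q (m + U_(j) *+ 2)%MM = has_sq Q m.
Proof.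
move=> Qj; apply/existsP/existsP => -[i /andP [qi hi]]; exists i; rewrite qi /=;
  move: hi; rewrite mnmDE mulmnE mnm1E; case: eqP => [Eji|]; rewrite ?addn0 //;
  by move: qi; rewrite -Eji (negbTE Qj).
Qed.

Lemma sq_idealMr p q : p \in sq_ideal Q -> p * q \in sq_ideal Q.
Proof. exact/mono_spanMr/has_sq_upclosed. Qed.

Lemma sq_idealMl p q : p \in sq_ideal Q -> q * p \in sq_ideal Q.
Proof. exact/mono_spanMl/has_sq_upclosed. Qed.

Lemma sq_idealX2 j : Q j -> 'X_j ^+ 2 \in sq_ideal Q.
Proof.
move=> Qj; rewrite mpolyXn; apply: mono_spanX; apply/existsP; exists j.
by rewrite Qj mulmnE mnm1E eqxx.
Qed.

Lemma sq_ideal_sub Q' : {subset Q <= Q'} -> {subset sq_ideal Q <= sq_ideal Q'}.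
Proof.
move=> sQQ'; apply: mono_span_sub => m /existsP [i /andP [qi hi]].
by apply/existsP; exists i; rewrite hi andbT; apply: sQQ'.
Qed.

Lemma sq_ideal_X2M j r : ~~ Q j -> 'X_j ^+ 2 * r \in sq_ideal Q -> r \in sq_ideal Q.
Proof.
move=> Qj /mono_spanP h; apply/mono_spanP => m hm.
have := h (m + U_(j) *+ 2)%MM; rewrite has_sq_addU2 // hm mpolyXn mulrC.
by rewrite addmC mcoeffMX => ->.
Qed.

Lemma sq_ideal_deriv i p :
  2%N \in [pchar R] -> Q i -> p \in sq_ideal Q -> mderiv i p \in sq_ideal Q.
Proof.
move=> pchar2 Qi /mono_spanP hp; apply/mono_spanP => m hm; rewrite mcoeff_deriv.
case Emi: (m i) => [|[|e]].
- by rewrite hp ?mul0rn // has_sq_addU.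
- by rewrite mulr2n addrr_pchar2.
- by move: hm; rewrite /has_sq; case/existsP; exists i; rewrite Qi Emi.
Qed.

End SquareIdeals.

Definition mvars_in (V : pred 'I_k) : {pred {mpoly R[k]}} :=
  mono_span (fun m => [forall i, (m i != 0%N) ==> V i]).

Section RestrictedVariables.
Variable V : pred 'I_k.

Lemma mvars_inP p :
  reflect (forall m i, ~~ V i -> m i != 0%N -> p@_m = 0) (p \in mvars_in V).
Proof.
apply: (iffP (mono_spanP _ _)) => h m => [i Vi mi|].
  by apply: h; rewrite negb_forall; apply/existsP; exists i; rewrite negb_imply mi.
by rewrite negb_forall => /existsP [i]; rewrite negb_imply => /andP [mi Vi]; apply: h Vi mi.
Qed.

Fact mvars_in_subring_closed : subring_closed (mvars_in V).
Proof.
split=> [|p q hp hq|p q /mvars_inP hp /mvars_inP hq].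
- by rewrite -mpolyX0; apply: mono_spanX; apply/forallP => i; rewrite mnm0E.
- exact: rpredB.
apply/mvars_inP => m i Vi mi; rewrite mcoeffM big1 // => -[m1 m2] /= /eqP Em.
have := congr1 (fun m0 : 'X_{1..k} => m0 i) Em; rewrite /= mnmDE => Emi.
move: mi; rewrite Emi; case E1: (m1 i) => [|e] /= m2i.
  by rewrite (hq _ i) ?mulr0.
by rewrite (hp _ i) ?mul0r ?E1.
Qed.

HB.instance Definition _ :=
  GRing.isSubringClosed.Build {mpoly R[k]} (mvars_in V) mvars_in_subring_closed.

Lemma mvars_inX i : V i -> 'X_i \in mvars_in V.
Proof.
move=> Vi; apply: mono_spanX; apply/forallP => j.
by rewrite mnm1E; case: (i =P j) => [<-|].
Qed.

Lemma mvars_in_sub V' : {subset V <= V'} -> {subset mvars_in V <= mvars_in V'}.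
Proof.
move=> sVV'; apply: mono_span_sub => m /forallP h; apply/forallP => i.
by apply/implyP => /(implyP (h i)) /sVV'.
Qed.

Lemma mvars_in_deriv i p : p \in mvars_in V -> mderiv i p \in mvars_in V.
Proof.
move=> /mvars_inP hp; apply/mvars_inP => m j Vj mj; rewrite mcoeff_deriv (hp _ j) ?mul0rn //.
by rewrite mnmDE -lt0n (leq_trans _ (leq_addr _ _)) // lt0n.
Qed.

Lemma mderiv_mvars_eq0 i p : ~~ V i -> p \in mvars_in V -> mderiv i p = 0.
Proof.
move=> Vi /mvars_inP hp; apply/mpolyP => m.
by rewrite mcoeff0 mcoeff_deriv (hp _ i) ?mul0rn // mnmDE mnm1E eqxx addn1.
Qed.

End RestrictedVariables.

Lemma mvars_inT p : p \in mvars_in predT.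
Proof. by apply/mvars_inP. Qed.

Lemma mcoeffMXE p m m' :
  (p * 'X_[m])@_m' = if (m <= m')%MM then p@_(m' - m) else 0.
Proof.
case: ifP => hm; first by rewrite -{1}(submK hm) addmC mcoeffMX.
apply: memN_msupp_eq0; rewrite (perm_mem (msuppMX p m)).
by apply/mapP => -[m'' _ Em']; move: hm; rewrite Em' lem_addr.
Qed.

Definition mdivX (i : 'I_k) (e : nat) p : {mpoly R[k]} :=
  \sum_(m <- msupp p | (e <= m i)%N) p@_m *: 'X_[m - U_(i) *+ e].

Section DivisionByVariablePowers.
Variables (i : 'I_k) (e : nat).

Lemma lem_mulU m : (U_(i) *+ e <= m)%MM = (e <= m i)%N.
Proof.
apply/mnm_lepP/idP => [/(_ i)|h j]; first by rewrite mulmnE mnm1E eqxx mul1n.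
by rewrite mulmnE mnm1E; case: eqP => [<-|]; rewrite ?mul1n ?mul0n.
Qed.

Lemma mcoeff_mdivX p m : (mdivX i e p)@_m = p@_(m + U_(i) *+ e).
Proof.
have -> : p@_(m + U_(i) *+ e) =
    \sum_(m' <- msupp p) p@_m' * (m' == (m + U_(i) *+ e)%MM)%:R.
  by rewrite {1}[p]mpolyE raddf_sum /=; apply: eq_bigr => m' _; rewrite mcoeffZ mcoeffX.
rewrite /mdivX raddf_sum /= big_mkcond; apply: eq_bigr => m' _.
rewrite mcoeffZ mcoeffX; case: ifP => hm'.
  by rewrite -(inj_eq (@addIm _ (U_(i) *+ e)%MM)) /= submK // lem_mulU.
case: eqP => Em'; rewrite ?mulr0 //.
by move: hm'; rewrite Em' mnmDE mulmnE mnm1E eqxx mul1n leq_addl.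
Qed.

Lemma mcoeff_mdivXM p m :
  (mdivX i e p * 'X_[U_(i) *+ e])@_m = if (e <= m i)%N then p@_m else 0.
Proof. by rewrite mcoeffMXE mcoeff_mdivX lem_mulU; case: ifP => // h; rewrite submK ?lem_mulU. Qed.

Lemma mcoeff_mdivX_rem p m :
  (p - mdivX i e p * 'X_[U_(i) *+ e])@_m = if (e <= m i)%N then 0 else p@_m.
Proof. by rewrite mcoeffB mcoeff_mdivXM; case: ifP; rewrite ?subrr ?subr0. Qed.

Lemma mvars_in_mdivX V p : p \in mvars_in V -> mdivX i e p \in mvars_in V.
Proof.
move=> /mvars_inP hp; apply/mvars_inP => m j Vj mj; rewrite mcoeff_mdivX (hp _ j) //.
by rewrite mnmDE -lt0n (leq_trans _ (leq_addr _ _)) // lt0n.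
Qed.

End DivisionByVariablePowers.

Lemma sq_ideal_decomp (Q V : pred 'I_k) (js : seq 'I_k) r :
  uniq js -> r \in mvars_in V -> r \in sq_ideal [pred i | Q i || (i \in js)] ->
  exists s : 'I_k -> {mpoly R[k]}, (forall j, s j \in mvars_in V) /\
    r - \sum_(j <- js) 'X_j ^+ 2 * s j \in sq_ideal Q.
Proof.
elim: js r => [|j js IH] r /=.
  move=> _ _ rQ; exists (fun _ => 0); split=> [j|]; first exact: rpred0.
  by rewrite big_nil subr0; apply: sq_ideal_sub rQ => i; rewrite !inE orbF.
case/andP=> jNjs ujs rV rQ; set d := mdivX j 2 r; set r1 := r - d * 'X_[U_(j) *+ 2].
have r1V : r1 \in mvars_in V.
  apply/mvars_inP => m i Vi mi; rewrite mcoeff_mdivX_rem.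
  by case: ifP => // _; move/mvars_inP: rV => rV; apply: rV Vi mi.
have r1Q : r1 \in sq_ideal [pred i | Q i || (i \in js)].
  apply/mono_spanP => m hm; rewrite mcoeff_mdivX_rem; case: ifP => // mj.
  move/mono_spanP: rQ => rQ; apply: rQ; apply: contra hm => /existsP [i /andP [/= Qi mi]].
  apply/existsP; exists i; rewrite mi andbT /=; move: Qi; rewrite inE.
  by case: (i =P j) => [Eij|//]; move: mi; rewrite Eij mj.
have [s [sV r1s]] := IH r1 ujs r1V r1Q.
exists (fun i => if i == j then d else s i); split=> [i|].
  by case: eqP => _; [apply: mvars_in_mdivX | apply: sV].
rewrite big_cons eqxx (eq_big_seq (fun i => 'X_i ^+ 2 * s i)) => [|i ijs]; last first.
  by rewrite ifN //; apply: contraNneq jNjs => <-.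
by rewrite opprD addrA mpolyXn mulrC.
Qed.

(** * Derivations and substitutions *)

Definition der (V : pred 'I_k) (F : 'I_k -> {mpoly R[k]}) p : {mpoly R[k]} :=
  \sum_(i < k | V i) mderiv i p * F i.

Section Derivations.
Variables (V : pred 'I_k) (F : 'I_k -> {mpoly R[k]}).

Fact der_is_zmod_morphism : zmod_morphism (der V F).
Proof.
move=> p q; rewrite /der -sumrB; apply: eq_bigr => i _.
by rewrite mderivB mulrBl.
Qed.

HB.instance Definition _ :=
  GRing.isZmodMorphism.Build {mpoly R[k]} {mpoly R[k]} (der V F) der_is_zmod_morphism.

Lemma derM p q : der V F (p * q) = der V F p * q + p * der V F q.
Proof.
rewrite /der mulr_suml mulr_sumr -big_split; apply: eq_bigr => i _.
by rewrite mderivM mulrDl -!mulrA [q * F i]mulrC.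
Qed.

Lemma derC c : der V F c%:MP = 0.
Proof. by rewrite /der big1 // => i _; rewrite mderivC mul0r. Qed.

Lemma derX j : der V F 'X_j = if V j then F j else 0.
Proof.
have dX i : mderiv i ('X_j : {mpoly R[k]}) = (j == i)%:R.
  rewrite mderivX mnm1E; case: eqP => [->|_]; last by rewrite scale0r.
  by rewrite [(_ - _)%MM](_ : _ = 0%MM) ?mpolyX0 ?scale1r //; apply/mnmP => l; rewrite !mnmE subnn.
rewrite /der; case: ifP => Vj.
  rewrite (bigD1 j) //= dX eqxx mul1r big1 ?addr0 // => i /andP [_ ij].
  by rewrite dX eq_sym (negbTE ij) mul0r.
rewrite big1 // => i Vi; rewrite dX.
by case: (j =P i) => [Eji|]; [move: Vj; rewrite Eji Vi | rewrite mul0r].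
Qed.

End Derivations.

Definition msubst k' (F : nat -> {mpoly R[k']}) : {rmorphism {mpoly R[k]} -> {mpoly R[k']}} :=
  comp_mpoly [tuple F i | i < k].

Arguments msubst {k'} F.

Lemma msubstX k' (F : nat -> {mpoly R[k']}) i : msubst F 'X_i = F i.
Proof. by rewrite /msubst /= comp_mpolyXU -tnth_nth tnth_mktuple. Qed.

Lemma msubstC k' (F : nat -> {mpoly R[k']}) c : msubst F c%:MP = c%:MP.
Proof. exact: comp_mpolyC. Qed.

Section Uniqueness.
Variable S : comNzRingType.

Lemma eq_rmorph_mpoly (f g : {rmorphism {mpoly R[k]} -> S}) (V : pred 'I_k) p :
  (forall c, f c%:MP = g c%:MP) -> (forall i, V i -> f 'X_i = g 'X_i) ->
  p \in mvars_in V -> f p = g p.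
Proof.
move=> fgC fgX /mvars_inP pV; rewrite [p]mpolyE !rmorph_sum; apply: eq_big_seq => m.
rewrite mcoeff_msupp => pm; rewrite -mul_mpolyC !rmorphM fgC mpolyXE_id !rmorph_prod.
congr (_ * _); apply: eq_bigr => i _; rewrite !rmorphXn.
have [Vi|Vi] := boolP (V i); first by rewrite fgX.
by have /eqP -> : m i == 0%N by apply: contraTT pm => /(pV m i Vi) ->; rewrite eqxx.
Qed.

Lemma der_along_eq0 (h : {rmorphism {mpoly R[k]} -> S}) (D : {mpoly R[k]} -> S) :
  {morph D : x y / x + y} -> (forall c, D c%:MP = 0) ->
  (forall p q, D (p * q) = D p * h q + h p * D q) -> (forall i, D 'X_i = 0) ->
  forall p, D p = 0.
Proof.
move=> DD DC DM DX p; have D0 : D 0 = 0 by rewrite -mpolyC0 DC.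
rewrite [p]mpolyE (big_morph D DD D0) big1 // => m _.
have DMz x y : D x = 0 -> D y = 0 -> D (x * y) = 0.
  by move=> Dx Dy; rewrite DM Dx Dy mul0r mulr0 addr0.
rewrite -mul_mpolyC DMz ?DC // mpolyXE_id.
apply: (big_ind (fun x => D x = 0)) => [|x y|i _]; first by rewrite -mpolyC1 DC.
  exact: DMz.
elim: (m i) => [|e IH]; first by rewrite expr0 -mpolyC1 DC.
by rewrite exprS DMz.
Qed.

Lemma eq_der_along (h : {rmorphism {mpoly R[k]} -> S}) (D1 D2 : {mpoly R[k]} -> S) :
  {morph D1 : x y / x + y} -> {morph D2 : x y / x + y} ->
  (forall c, D1 c%:MP = D2 c%:MP) ->
  (forall p q, D1 (p * q) = D1 p * h q + h p * D1 q) ->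
  (forall p q, D2 (p * q) = D2 p * h q + h p * D2 q) ->
  (forall i, D1 'X_i = D2 'X_i) -> D1 =1 D2.
Proof.
move=> D1D D2D D12C D1M D2M D12X p; apply/eqP; rewrite -subr_eq0; apply/eqP; move: p.
apply: (der_along_eq0 (h := h)) => [x y|c|x y|i]; rewrite ?D12C ?D12X ?subrr //.
  by rewrite D1D D2D addrACA opprD.
by rewrite D1M D2M; ring.
Qed.

End Uniqueness.

End MonomialSpans.

Arguments msubst {R k k'} F.

Notation sq_ideal Q := (mono_span (has_sq Q)).

(** * Polynomials over F_2 *)

Lemma pchar2_F2 : 2%N \in [pchar 'F_2].
Proof. exact: pchar_Fp. Qed.

Section F2Polynomials.
Variable k : nat.
Implicit Types (p q : F2poly k) (gs : seq (F2poly k)).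

Lemma pchar2_F2poly : 2%N \in [pchar F2poly k].
Proof. exact: (rmorph_pchar (@mpolyC k 'F_2) pchar2_F2). Qed.

Lemma addrr_F2poly p : p + p = 0.
Proof. exact: (addrr_pchar2 pchar2_F2poly). Qed.

Lemma subr_F2poly p q : p - q = p + q.
Proof. by rewrite (oppr_pchar2 pchar2_F2poly). Qed.

Lemma sqr_sum_F2poly (I : Type) (r : seq I) (P : pred I) (F : I -> F2poly k) :
  (\sum_(i <- r | P i) F i) ^+ 2 = \sum_(i <- r | P i) F i ^+ 2.
Proof. by rewrite -(pFrobenius_autE pchar2_F2poly) rmorph_sum. Qed.

Lemma sqrrD_F2poly p q : (p + q) ^+ 2 = p ^+ 2 + q ^+ 2.
Proof. by rewrite -(pFrobenius_autE pchar2_F2poly) rmorphD. Qed.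

Lemma telescope_F2poly (y : nat -> F2poly k) i N : (i < N)%N ->
  \sum_(i.+1 <= l < N) (y l.-1 + y l) = y i + y N.-1.
Proof.
by move=> iN; rewrite (telescope_sumr_eq (fun l => y l.-1)) // => [|l _];
  rewrite subr_F2poly addrC.
Qed.

Lemma eq_rmorph_F2poly (S : comNzRingType) (f g : {rmorphism F2poly k -> S})
    (V : pred 'I_k) p :
  (forall i, V i -> f 'X_i = g 'X_i) -> p \in mvars_in V -> f p = g p.
Proof. by apply: eq_rmorph_mpoly => c; rewrite -[c]natr_Zp !rmorph_nat. Qed.

Lemma XvE (i : 'I_k) : Xv k i = 'X_i.
Proof. by rewrite /Xv valK. Qed.

Lemma Xv_out i : (k <= i)%N -> Xv k i = 0.
Proof. by move=> ki; rewrite /Xv insubF // ltnNge ki. Qed.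

Lemma Xv_ord i (ik : (i < k)%N) : Xv k i = 'X_(Ordinal ik).
Proof. by rewrite -XvE. Qed.

Lemma in_idealP gs a :
  in_ideal gs a <-> exists c : nat -> F2poly k, a = \sum_(i < size gs) c i * gs`_i.
Proof.
split => [[cs [_ ->]]|[c ->]]; first by exists (fun i => cs`_i).
exists (mkseq c (size gs)); rewrite size_mkseq; split => //.
by apply: eq_bigr => i _; rewrite nth_mkseq.
Qed.

Section Ideals.
Variable gs : seq (F2poly k).

Lemma in_ideal0 : in_ideal gs 0.
Proof. by apply/in_idealP; exists (fun _ => 0); rewrite big1 // => i; rewrite mul0r. Qed.

Lemma in_idealD a b : in_ideal gs a -> in_ideal gs b -> in_ideal gs (a + b).
Proof.
move=> /in_idealP [c ->] /in_idealP [d ->]; apply/in_idealP.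
by exists (fun i => c i + d i); rewrite -big_split; apply: eq_bigr => i _; rewrite mulrDl.
Qed.

Lemma in_idealM q a : in_ideal gs a -> in_ideal gs (q * a).
Proof.
move=> /in_idealP [c ->]; apply/in_idealP; exists (fun i => q * c i).
by rewrite mulr_sumr; apply: eq_bigr => i _; rewrite mulrA.
Qed.

Lemma in_ideal_gen g : g \in gs -> in_ideal gs g.
Proof.
move=> gs_g; have gi : (index g gs < size gs)%N by rewrite index_mem.
apply/in_idealP; exists (fun i => (i == index g gs)%:R).
rewrite (bigD1 (Ordinal gi)) //= eqxx mul1r nth_index // big1 ?addr0 // => i.
by rewrite -val_eqE /= => /negbTE ->; rewrite mul0r.
Qed.

Lemma in_ideal_sum (I : Type) (r : seq I) (P : pred I) (F : I -> F2poly k) :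
  (forall i, P i -> in_ideal gs (F i)) -> in_ideal gs (\sum_(i <- r | P i) F i).
Proof. by move=> h; apply: big_ind => //; [exact: in_ideal0 | exact: in_idealD]. Qed.

Lemma in_ideal_mono_span (P : pred 'X_{1..k}) a : upclosed P -> {subset gs <= mono_span P} ->
  in_ideal gs a -> a \in mono_span P.
Proof.
move=> upP sgsP /in_idealP [c ->]; apply: rpred_sum => i _.
exact/mono_spanMl/sgsP/mem_nth.
Qed.

Lemma mono_span_in_ideal (P : pred 'X_{1..k}) a :
  (forall m, P m -> exists2 g, g \in gs & exists q, 'X_[m] = q * g) ->
  a \in mono_span P -> in_ideal gs a.
Proof.
move=> Pgs /mono_spanP aP; rewrite [a]mpolyE; apply: in_ideal_sum => m _.
have [/Pgs [g gs_g [q ->]]|Pm] := boolP (P m); last by rewrite aP // scale0r; apply: in_ideal0.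
by rewrite -mul_mpolyC mulrA; apply/in_idealM/in_ideal_gen.
Qed.

End Ideals.

End F2Polynomials.

Lemma in_ideal_rmorph k k' (f : {rmorphism F2poly k -> F2poly k'}) gs gs' a :
  (forall g, g \in gs -> in_ideal gs' (f g)) -> in_ideal gs a -> in_ideal gs' (f a).
Proof.
move=> fgs /in_idealP [c ->]; rewrite rmorph_sum; apply: in_ideal_sum => i _.
by rewrite rmorphM; apply/in_idealM/fgs/mem_nth.
Qed.

Lemma msubst_Xv k k' (F : nat -> F2poly k') j : (j < k)%N -> msubst F (Xv k j) = F j.
Proof. by move=> jk; rewrite (Xv_ord jk) msubstX. Qed.

(** * The Koszul form of the E_1-term *)

Section E1.
Variable n : nat.
Hypothesis n_gt0 : (0 < n)%N.

Local Notation k := (kA n).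
Local Notation nn := (n * n)%N.
Local Notation T := (F2poly (kA n)).

Lemma kAE : kA n = (nn + n)%N.
Proof. by rewrite /kA mulSn addnC. Qed.

Lemma ltn_kA (i : 'I_k) : (i < nn + n)%N.
Proof. by rewrite -kAE. Qed.

Definition exterior : pred 'I_k := fun i => (n <= i)%N.
Local Notation IA := (sq_ideal exterior).

Lemma Xv2_IA t : (n <= t)%N -> Xv k t ^+ 2 \in IA.
Proof.
move=> nt; have [tk|kt] := ltnP t k; last by rewrite Xv_out // expr0n rpred0.
by rewrite (Xv_ord tk); apply: sq_idealX2.
Qed.

Lemma IA_gensP g : g \in IA_gens n -> exists2 t, (n <= t < k)%N & g = Xv k t ^+ 2.
Proof.
case/allpairsP => -[o j] /= [+ + ->]; rewrite !mem_iota => /andP [o1 o2] /andP [_ j2].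
by exists (o * n + j) => //; rewrite kAE; apply/andP; split; nia.
Qed.

Lemma inIAE a : inIA a <-> a \in IA.
Proof.
split.
  apply: in_ideal_mono_span; first exact: has_sq_upclosed.
  by move=> g /IA_gensP [t /andP [nt _] ->]; apply: Xv2_IA.
apply: mono_span_in_ideal => m /existsP [i /andP [ni mi]]; exists ('X_i ^+ 2).
  have -> : ('X_i : T) = hA n (i %/ n) (i %% n) by rewrite /hA -divn_eq XvE.
  have := ltn_kA i; rewrite /exterior /= in ni => ik.
  apply: allpairs_f; rewrite mem_iota ?add0n ?ltn_mod // divn_gt0 // ni /=.
  by rewrite add1n ltn_divLR //; nia.
by exists 'X_[m - U_(i) *+ 2]; rewrite mpolyXn -mpolyXD submK // lem_mulU.
Qed.

(* [h_{2n,j}] has index [nn + j]: [zvars_le m] allows [h_{2n,j}] only for [j <= m]. *)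
Local Notation zvars_le m := (@mvars_in 'F_2 k [pred i : 'I_k | (i <= nn + m)%N]).

Definition dK : T -> T :=
  der [pred i : 'I_k | (nn < i)%N] (fun i : 'I_k => Xv k (i - nn) ^+ 2).

HB.instance Definition _ := Algebra.Additive.copy dK dK.

Lemma dKM p q : dK (p * q) = dK p * q + p * dK q.
Proof. exact: derM. Qed.

Lemma zvars_le_Xv m t : (t <= nn + m)%N -> Xv k t \in zvars_le m.
Proof.
move=> tm; have [tk|kt] := ltnP t k; last by rewrite Xv_out // rpred0.
by rewrite (Xv_ord tk); apply: mvars_inX.
Qed.

Lemma zvars_le_mono m m' : (m <= m')%N -> {subset zvars_le m <= zvars_le m'}.
Proof. by move=> mm'; apply: mvars_in_sub => i; rewrite !inE; lia. Qed.

Lemma zvars_le_top p : p \in zvars_le n.-1.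
Proof. by apply/mvars_inP => m i /=; have := ltn_kA i; lia. Qed.

Lemma dK_z j : (0 < j < n)%N -> dK (Xv k (nn + j)) = Xv k j ^+ 2.
Proof.
move=> jn; have zk : (nn + j < k)%N by rewrite kAE; lia.
by rewrite (Xv_ord zk) /dK derX /= ifT ?addKn //; lia.
Qed.

Lemma dK_zvars_le0 p : p \in zvars_le 0 -> dK p = 0.
Proof.
move=> p0; rewrite /dK /der big1 // => i ni.
by rewrite (mderiv_mvars_eq0 _ p0) ?mul0r //= addn0 -ltnNge.
Qed.

Lemma dK_IA p : p \in IA -> dK p \in IA.
Proof.
move=> pIA; rewrite /dK; apply: rpred_sum => i /= ni; apply: sq_idealMr.
by apply: sq_ideal_deriv pchar2_F2 _ pIA; rewrite /exterior /=; nia.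
Qed.

Lemma dK_zvars m p : p \in zvars_le m -> dK p \in zvars_le m.
Proof.
move=> pm; rewrite /dK; apply: rpred_sum => i _; rewrite rpredM ?mvars_in_deriv // rpredX //.
by apply: zvars_le_Xv; have := ltn_kA i; nia.
Qed.

Definition low_vars m : seq 'I_k := [seq i : 'I_k <- enum 'I_k | (0 < i <= m)%N].

Lemma mem_low_vars m i : (i \in low_vars m) = (0 < i <= m)%N.
Proof. by rewrite mem_filter mem_enum andbT. Qed.

Lemma dK_zvars_sq m p : p \in zvars_le m ->
  dK p \in sq_ideal [pred i | exterior i || (i \in low_vars m)].
Proof.
move=> pm; rewrite /dK; apply: rpred_sum => i /= ni; have [im|mi] := leqP i (nn + m).
  have ik : (i - nn < k)%N by apply: leq_ltn_trans (leq_subr _ _) (ltn_ord i).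
  rewrite (Xv_ord ik); apply/sq_idealMl/sq_idealX2.
  by rewrite /= mem_low_vars /=; apply/orP; right; lia.
by rewrite (mderiv_mvars_eq0 _ pm) ?mul0r ?rpred0 //= -ltnNge.
Qed.

Lemma mem_low_vars_lt m j : (m < n)%N -> j \in low_vars m -> (0 < j < n)%N.
Proof. by rewrite mem_low_vars => mn /andP [-> /leq_ltn_trans ->]. Qed.

Lemma ltn_n_kA j : (j < n)%N -> (j < k)%N.
Proof. by rewrite kAE => jn; apply: leq_trans jn (leq_addl _ _). Qed.

Lemma uniq_low_vars m : uniq (low_vars m).
Proof. exact/filter_uniq/enum_uniq. Qed.

Lemma zvars_split m a : (m.+1 < n)%N -> a \in zvars_le m.+1 -> exists a1 a2,
  [/\ a1 \in zvars_le m, a2 \in zvars_le m & a - (a1 + Xv k (nn + m.+1) * a2) \in IA].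
Proof.
move=> mn /mvars_inP am; have zk : (nn + m.+1 < k)%N by rewrite kAE; lia.
set z := Ordinal zk; set b := a - mdivX z 2 a * 'X_[U_(z) *+ 2].
have bE mu : b@_mu = if (2 <= mu z)%N then 0 else a@_mu by rewrite mcoeff_mdivX_rem.
exists (b - mdivX z 1 b * 'X_[U_(z) *+ 1]), (mdivX z 1 b); split.
- apply/mvars_inP => mu i /= im mui; rewrite mcoeff_mdivX_rem bE.
  case: ifP => // zmu; case: ifP => // _; apply: (am mu i) => //=.
  case: (i =P z) => [Eiz|/eqP]; last by rewrite -val_eqE /=; lia.
  by move: zmu mui; rewrite Eiz; case: (mu z).
- apply/mvars_inP => mu i /= im mui; rewrite mcoeff_mdivX bE; case: ifP => // zmu.
  apply: (am _ i); last by rewrite mnmDE addn_eq0 negb_and mui.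
  case: (i =P z) => [Eiz|/eqP]; last by rewrite /= -val_eqE /=; lia.
  by move: zmu mui; rewrite Eiz mulm1n mnmDE mnm1E eqxx addn1; case: (mu z).
have -> : a - (b - mdivX z 1 b * 'X_[U_(z) *+ 1] + Xv k (nn + m.+1) * mdivX z 1 b) =
    mdivX z 2 a * 'X_z ^+ 2 by rewrite (Xv_ord zk) mulm1n mpolyXn /b; ring.
by apply/sq_idealMl/sq_idealX2; rewrite /exterior /=; nia.
Qed.

Lemma zvars_IA_coeffs m a1 a2 : (m.+1 < n)%N -> a1 \in zvars_le m ->
  a2 \in zvars_le m -> a1 + Xv k (nn + m.+1) * a2 \in IA -> a1 \in IA /\ a2 \in IA.
Proof.
move=> mn /mvars_inP a1m /mvars_inP a2m; have zk : (nn + m.+1 < k)%N by rewrite kAE; lia.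
set z := Ordinal zk; have zm : ~~ (z <= nn + m)%N by rewrite /= -ltnNge; lia.
rewrite (Xv_ord zk) mulrC => /mono_spanP a12; split; apply/mono_spanP => mu mu_IA.
  case Emu: (mu z) => [|e]; last by apply: a1m zm _; rewrite Emu.
  move: (a12 mu mu_IA); rewrite mcoeffD mcoeffMXE.
  by rewrite (_ : (U_(z) <= mu)%MM = false) ?addr0 // lep1mP Emu.
case Emu: (mu z) => [|e]; last by apply: a2m zm _; rewrite Emu.
move: (a12 (mu + U_(z))%MM); rewrite has_sq_addU // => /(_ mu_IA).
by rewrite mcoeffD addmC mcoeffMX (a1m _ z) ?add0r // mnmDE mnm1E eqxx Emu.
Qed.

Definition koszul_exact m : Prop := forall a, a \in zvars_le m -> dK a \in IA ->
  exists r b, [/\ r \in zvars_le 0, b \in zvars_le m & a - r - dK b \in IA].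

Lemma koszul_exact0 : koszul_exact 0.
Proof. by move=> a a0 _; exists a, 0; rewrite raddf0 subrr subr0; split; rewrite ?rpred0. Qed.

Lemma Xv2_zvars_le0 j : (j < n)%N -> Xv k j ^+ 2 \in zvars_le 0.
Proof. by move=> jn; rewrite rpredX // zvars_le_Xv //; nia. Qed.

Lemma koszul_coeff_boundary m a1 a2 : (m.+1 < n)%N -> koszul_exact m ->
  a1 \in zvars_le m -> a2 \in zvars_le m ->
  dK a1 + Xv k m.+1 ^+ 2 * a2 \in IA -> dK a2 \in IA ->
  exists2 beta, beta \in zvars_le m & a2 - dK beta \in IA.
Proof.
move=> mn IH a1m a2m cyc1 cyc2; set g := Xv k m.+1 ^+ 2.
have g0 : g \in zvars_le 0 by apply: Xv2_zvars_le0; lia.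
have [r2 [b2 [r2_0 b2m r2E]]] := IH a2 a2m cyc2.
set Q := [pred i : 'I_k | exterior i || (i \in low_vars m)].
have gr2Q : g * r2 \in sq_ideal Q.
  have -> : g * r2 = (dK a1 + g * a2 - g * (a2 - r2 - dK b2)) - dK (a1 + g * b2).
    rewrite raddfD /= dKM (dK_zvars_le0 g0).
    by move: (dK a1) (dK b2) => da1 db2; ring.
  apply: rpredB; last by apply: dK_zvars_sq; rewrite rpredD // rpredM // (zvars_le_mono _ g0).
  have sIQ : {subset exterior <= Q} by move=> i ext_i; apply/orP; left.
  exact: sq_ideal_sub sIQ _ (rpredB cyc1 (sq_idealMl _ r2E)).
have mk := ltn_n_kA mn.
(* [y_{m+1}^2] is a nonzerodivisor modulo [IA] and [y_1^2, ..., y_m^2]. *)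
have /sq_ideal_X2M r2Q : 'X_(Ordinal mk) ^+ 2 * r2 \in sq_ideal Q by rewrite -Xv_ord.
have {r2Q} [|s [s0 r2s]] := sq_ideal_decomp (uniq_low_vars m) r2_0 (r2Q _).
  by rewrite !inE mem_low_vars /exterior /= ltnn orbF -ltnNge.
exists (\sum_(j <- low_vars m) Xv k (nn + j) * s j + b2).
  rewrite rpredD // big_seq rpred_sum // => j jm.
  rewrite rpredM ?zvars_le_Xv ?(zvars_le_mono _ (s0 j)) // leq_add2l.
  by move: jm; rewrite mem_low_vars => /andP [].
have -> : a2 - dK (\sum_(j <- low_vars m) Xv k (nn + j) * s j + b2) =
    (a2 - r2 - dK b2) + (r2 - \sum_(j <- low_vars m) 'X_j ^+ 2 * s j).
  rewrite raddfD raddf_sum /= (eq_big_seq (fun j => 'X_j ^+ 2 * s j)) => [|j]; first by ring.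
  move/(mem_low_vars_lt (ltnW mn)) => jn.
  by rewrite dKM dK_z ?XvE ?(dK_zvars_le0 (s0 j)) ?mulr0 ?addr0.
exact: rpredD.
Qed.

Lemma koszul_exactS m : (m.+1 < n)%N -> koszul_exact m -> koszul_exact m.+1.
Proof.
move=> mn IH a am cyc; have [a1 [a2 [a1m a2m aE]]] := zvars_split mn am.
set z := Xv k (nn + m.+1) in aE *; set g := Xv k m.+1 ^+ 2.
have dz : dK z = g by apply: dK_z; lia.
have g0 : g \in zvars_le 0 by apply: Xv2_zvars_le0; lia.
have gm := zvars_le_mono (leq0n m) g0.
have zm : z \in zvars_le m.+1 by apply: zvars_le_Xv.
have cyc' : dK a1 + g * a2 + z * dK a2 \in IA.
  have -> : dK a1 + g * a2 + z * dK a2 = dK a - dK (a - (a1 + z * a2)).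
    rewrite !(raddfB, raddfD) /= dKM dz.
    by move: (dK a) (dK a1) (dK a2) => da da1 da2; ring.
  exact: rpredB cyc (dK_IA aE).
have da1m : dK a1 + g * a2 \in zvars_le m by apply: rpredD; [exact: dK_zvars | exact: rpredM].
have [cyc1 cyc2] := zvars_IA_coeffs mn da1m (dK_zvars a2m) cyc'.
have [beta betam a2E] := koszul_coeff_boundary mn IH a1m a2m cyc1 cyc2.
have a0m : a1 + g * beta \in zvars_le m by apply/rpredD/rpredM.
have cyc0 : dK (a1 + g * beta) \in IA.
  have -> : dK (a1 + g * beta) = dK a1 + g * a2 - g * (a2 - dK beta).
    rewrite raddfD /= dKM (dK_zvars_le0 g0).
    by move: (dK a1) (dK beta) => da1 dbeta; ring.
  by apply: rpredB => //; apply: sq_idealMl.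
have [r [b [r0 bm abE]]] := IH _ a0m cyc0.
have lift := zvars_le_mono (leqnSn m).
exists r, (b + z * beta); split; first exact: r0.
  exact: rpredD (lift _ bm) (rpredM zm (lift _ betam)).
have -> : a - r - dK (b + z * beta) = (a - (a1 + z * a2)) + z * (a2 - dK beta)
    + (a1 + g * beta - r - dK b) - (g * beta + g * beta).
  rewrite raddfD /= dKM dz.
  by move: (dK b) (dK beta) => db dbeta; ring.
by rewrite addrr_F2poly subr0; exact: rpredD (rpredD aE (sq_idealMl _ a2E)) abE.
Qed.

Lemma dK_cycle_homologous a : dK a \in IA ->
  exists r b, r \in zvars_le 0 /\ a - r - dK b \in IA.
Proof.
suff exact_m m : (m < n)%N -> koszul_exact m.
  move=> cyc; have [|r [b [r0 _ abE]]] := exact_m n.-1 _ a (zvars_le_top a) cyc.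
    by rewrite prednK.
  by exists r, b.
elim: m => [_|m IH mn]; first exact: koszul_exact0.
exact: koszul_exactS mn (IH (ltnW mn)).
Qed.

(** * The change of coordinates *)

Lemma rmorph_IA (f : {rmorphism T -> T}) p :
  (forall t, (n <= t < k)%N -> f (Xv k t ^+ 2) \in IA) -> p \in IA -> f p \in IA.
Proof.
move=> fIA /inIAE pIA; apply/inIAE; apply: in_ideal_rmorph pIA => g.
by case/IA_gensP => t ntk ->; apply/inIAE/fIA.
Qed.

Lemma rhoAE : rhoA n = Xv k nn + \sum_(1 <= j < n) Xv k (nn + j).
Proof. by rewrite /rhoA -(big_mkord predT (fun j => Xv k (nn + j))) big_ltn // addn0. Qed.

Definition rho_sub (t : nat) : T := if t == nn then rhoA n else Xv k t.

Section RhoSubstitution.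
Variable F : nat -> T.
Hypothesis F_high : forall t, (n <= t)%N -> F t = rho_sub t.

Lemma msubst_rho : msubst F (rhoA n) = Xv k nn.
Proof.
have zk j : (j < n)%N -> (nn + j < k)%N by rewrite kAE ltn_add2l.
have nnk : (nn < k)%N by rewrite -[nn]addn0 zk.
rewrite rhoAE rmorphD rmorph_sum.
have -> : msubst F (Xv k nn) = rhoA n.
  by rewrite msubst_Xv // F_high ?leq_pmull // /rho_sub eqxx.
rewrite rhoAE -[RHS]addr0 -addrA; congr (_ + _).
rewrite -big_split big1_seq // => j /andP [_]; rewrite mem_index_iota => /andP [j0 jn].
rewrite msubst_Xv ?zk // F_high; last exact: leq_trans (leq_pmull _ n_gt0) (leq_addr _ _).
by rewrite /rho_sub -[X in _ == X]addn0 eqn_add2l eqn0Ngt j0 /= addrr_F2poly.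
Qed.

Lemma msubst_high_sq t : (n <= t < k)%N -> msubst F (Xv k t ^+ 2) \in IA.
Proof.
case/andP=> nt tk; rewrite rmorphXn msubst_Xv // F_high // /rho_sub.
case: eqP => _; last exact: Xv2_IA.
rewrite /rhoA sqr_sum_F2poly rpred_sum // => j _; apply: Xv2_IA.
exact: leq_trans (leq_pmull _ n_gt0) (leq_addr _ _).
Qed.

Lemma msubst_rho_sub t : (n <= t < k)%N -> msubst F (rho_sub t) = Xv k t.
Proof.
case/andP=> nt tk; rewrite {1}/rho_sub; case: eqP => [->|tnn]; first exact: msubst_rho.
by rewrite msubst_Xv // F_high // /rho_sub; case: eqP.
Qed.

End RhoSubstitution.

(* [sigma] writes y_0, y_i (0 < i < n) and z_0 in the original variables. *)
Definition sigma_f (i : nat) : T :=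
  if (i < n)%N then (if i == 0%N then Xv k n.-1 else Xv k i.-1 + Xv k i) else rho_sub i.

Definition tau_f (i : nat) : T :=
  if (i < n)%N then Xv k 0 + \sum_(i.+1 <= l < n) Xv k l else rho_sub i.

Local Notation sigma := (@msubst 'F_2 k k sigma_f).
Local Notation tau := (@msubst 'F_2 k k tau_f).

Lemma sigma_high t : (n <= t)%N -> sigma_f t = rho_sub t.
Proof. by rewrite /sigma_f ltnNge => ->. Qed.

Lemma tau_high t : (n <= t)%N -> tau_f t = rho_sub t.
Proof. by rewrite /tau_f ltnNge => ->. Qed.

Lemma sigma_tauX (i : 'I_k) : sigma (tau_f i) = 'X_i.
Proof.
have ltnk := ltn_n_kA; rewrite /tau_f; case: ltnP => [iN|ni]; last first.
  by rewrite (msubst_rho_sub sigma_high) ?XvE ?ni ?ltn_ord.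
rewrite rmorphD rmorph_sum !msubst_Xv ?ltnk // big_nat_cond.
rewrite (eq_bigr (fun l => Xv k l.-1 + Xv k l)) => [|l /andP [/andP [il ln] _]]; last first.
  by rewrite msubst_Xv ?ltnk // /sigma_f ln ifN // -lt0n (leq_ltn_trans _ il).
rewrite -big_nat_cond telescope_F2poly // /sigma_f n_gt0 eqxx.
by rewrite addrC -addrA addrr_F2poly addr0 XvE.
Qed.

Lemma tau_sigmaX (i : 'I_k) : tau (sigma_f i) = 'X_i.
Proof.
have ltnk := ltn_n_kA; rewrite /sigma_f; case: ltnP => [iN|ni]; last first.
  by rewrite (msubst_rho_sub tau_high) ?XvE ?ni ?ltn_ord.
case: eqP => [i0|/eqP i0].
  by rewrite msubst_Xv ?ltnk ?prednK // /tau_f ltn_predL n_gt0 prednK // big_geq // addr0 -XvE i0.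
rewrite rmorphD !msubst_Xv ?ltnk ?(leq_ltn_trans (leq_pred _)) // /tau_f iN.
rewrite (leq_ltn_trans (leq_pred _) iN) prednK ?lt0n // (big_ltn iN).
by rewrite addrACA addrr_F2poly add0r -addrA addrr_F2poly addr0 XvE.
Qed.

Lemma tauK : cancel tau sigma.
Proof.
move=> p; rewrite -[RHS]/(idfun p) -[LHS]/((sigma \o tau) p).
by apply: eq_rmorph_F2poly (mvars_inT p) => i _ /=; rewrite msubstX sigma_tauX.
Qed.

Lemma sigmaK : cancel sigma tau.
Proof.
move=> p; rewrite -[RHS]/(idfun p) -[LHS]/((tau \o sigma) p).
by apply: eq_rmorph_F2poly (mvars_inT p) => i _ /=; rewrite msubstX tau_sigmaX.
Qed.

Lemma sigma_IA p : p \in IA -> sigma p \in IA.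
Proof. exact/rmorph_IA/msubst_high_sq/sigma_high. Qed.

Lemma tau_IA p : p \in IA -> tau p \in IA.
Proof. exact/rmorph_IA/msubst_high_sq/tau_high. Qed.

HB.instance Definition _ := Algebra.Additive.copy (@dA n)
  (der [pred i : 'I_k | (nn <= i)%N]
     (fun i : 'I_k => hA n 0 ((i - nn + n).-1 %% n) ^+ 2 + hA n 0 (i - nn) ^+ 2)).

Lemma dAM (p q : T) : dA (p * q) = dA p * q + p * dA q.
Proof. exact: derM. Qed.

Lemma dAC c : dA c%:MP = 0 :> T.
Proof. exact: derC. Qed.

Lemma dA_low j : (j < nn)%N -> dA (Xv k j) = 0.
Proof.
move=> jnn; have [jk|kj] := ltnP j k; last by rewrite Xv_out // raddf0.
by rewrite (Xv_ord jk) [dA _]derX /= leqNgt jnn.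
Qed.

Lemma dA_z j : (j < n)%N ->
  dA (Xv k (nn + j)) = Xv k ((j + n).-1 %% n) ^+ 2 + Xv k j ^+ 2.
Proof.
move=> jn; have zk : (nn + j < k)%N by rewrite kAE ltn_add2l.
by rewrite (Xv_ord zk) [dA _]derX /= leq_addr addKn /hA !mul0n !add0n.
Qed.

Lemma dA_z_pos j : (0 < j < n)%N -> dA (Xv k (nn + j)) = Xv k j.-1 ^+ 2 + Xv k j ^+ 2.
Proof.
case/andP=> j0 jn; rewrite dA_z // -subn1 addnC -addnBA // addnC modnDr.
by rewrite subn1 modn_small // (leq_ltn_trans (leq_pred j)).
Qed.

Lemma dA_rho : dA (rhoA n) = 0.
Proof.
rewrite rhoAE raddfD raddf_sum /= big_nat_cond.
have -> : dA (Xv k nn) = Xv k n.-1 ^+ 2 + Xv k 0 ^+ 2.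
  by rewrite -[nn]addn0 dA_z // add0n modn_small ?ltn_predL.
rewrite (eq_bigr (fun j => Xv k j.-1 ^+ 2 + Xv k j ^+ 2)) => [|j /andP [jn _]].
  rewrite -big_nat_cond (telescope_F2poly (fun j => Xv k j ^+ 2)) //.
  by rewrite [Xv k 0 ^+ 2 + _]addrC addrr_F2poly.
by rewrite dA_z_pos.
Qed.

Lemma dA_telescope j : (j < n)%N ->
  dA (\sum_(j.+1 <= l < n) Xv k (nn + l)) = Xv k j ^+ 2 + Xv k n.-1 ^+ 2.
Proof.
move=> jn; rewrite raddf_sum /= big_nat_cond.
rewrite (eq_bigr (fun l => Xv k l.-1 ^+ 2 + Xv k l ^+ 2)) => [|l /andP [jl _]].
  by rewrite -big_nat_cond (telescope_F2poly (fun t => Xv k t ^+ 2)).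
by rewrite dA_z_pos //; case/andP: jl => /(leq_trans (ltn0Sn j)) -> ->.
Qed.

Lemma sigma_dKX (i : 'I_k) : sigma (dK 'X_i) = dA (sigma_f i).
Proof.
have nnn : (n <= nn)%N by rewrite leq_pmull.
rewrite /dK derX /=; case: ltnP => [nni|inn].
  have jn : (0 < i - nn < n)%N by rewrite subn_gt0 nni (ltn_subLR _ (ltnW nni)) ltn_kA.
  rewrite rmorphXn msubst_Xv ?ltn_n_kA //; last by case/andP: jn.
  rewrite [sigma_f i]sigma_high ?(leq_trans nnn (ltnW nni)) // /rho_sub gtn_eqF //.
  rewrite -{2}(subnKC (ltnW nni)) dA_z_pos // /sigma_f.
  by case/andP: jn => /lt0n_neq0 /negbTE -> ->; rewrite sqrrD_F2poly.
rewrite rmorph0 /sigma_f; case: ifP => [iN|/negbT]; last first.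
  rewrite -leqNgt => ni; rewrite /rho_sub; case: eqP => [_|/eqP inn']; first by rewrite dA_rho.
  by rewrite dA_low // ltn_neqAle inn' inn.
have low j : (j < n)%N -> dA (Xv k j) = 0 by move=> jn; apply: dA_low (leq_trans jn nnn).
case: eqP => _; first by rewrite low ?ltn_predL.
by rewrite raddfD /= !low ?addr0 // (leq_ltn_trans (leq_pred _) iN).
Qed.

Lemma sigma_dK p : sigma (dK p) = dA (sigma p).
Proof.
move: p; apply: (eq_der_along (h := sigma)) => [x y|x y|c|x y|x y|i].
- by rewrite raddfD (rmorphD sigma).
- by rewrite (rmorphD sigma) raddfD.
- by rewrite /dK derC msubstC rmorph0 dAC.
- by rewrite dKM (rmorphD sigma) !(rmorphM sigma).
- by rewrite (rmorphM sigma) dAM.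
- by rewrite sigma_dKX msubstX.
Qed.

Lemma dK_tau a : dK (tau a) = tau (dA a).
Proof. by rewrite -{2}[a]tauK -sigma_dK sigmaK. Qed.

(** * Comparison with C *)

Local Notation kc := (kC n).
Local Notation C := (F2poly (kC n)).

Definition psi_f (i : nat) : T := if (i < nn)%N then hA n (i %/ n) (i %% n) else rhoA n.

Lemma psiE (c : C) : psi c = msubst psi_f c.
Proof. by []. Qed.

HB.instance Definition _ := GRing.RMorphism.copy (@psi n) (msubst psi_f).

Lemma psi_Xv j (jnn : (j < nn)%N) : psi (Xv kc j) = Xv k j.
Proof.
have jkc : (j < kc)%N by apply: ltnW.
by rewrite psiE (msubst_Xv _ jkc) /psi_f jnn /hA -divn_eq.
Qed.

Lemma psi_rhoC : psi (rhoC n) = rhoA n.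
Proof. by rewrite psiE msubst_Xv // /psi_f ltnn. Qed.

Lemma psi_Xv_high t : (n <= t <= nn)%N -> psi (Xv kc t) = rho_sub t.
Proof.
case/andP=> _; rewrite leq_eqVlt /rho_sub => /orP [/eqP ->|tnn]; first by rewrite eqxx psi_rhoC.
by rewrite psi_Xv // ltn_eqF.
Qed.

Lemma dA_psi (c : C) : dA (psi c) = 0.
Proof.
rewrite psiE; move: c; apply: (der_along_eq0 (h := msubst psi_f)) => [x y|c|x y|i].
- by rewrite (rmorphD (msubst psi_f)) raddfD.
- by rewrite msubstC dAC.
- by rewrite (rmorphM (msubst psi_f)) dAM.
rewrite msubstX /psi_f; case: ifP => [inn|_]; last exact: dA_rho.
by rewrite /hA -divn_eq dA_low.
Qed.

Definition eps_f (i : nat) : C :=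
  if (i < n)%N then (if i == 0%N then Xv kc n.-1 else Xv kc i.-1 + Xv kc i) else Xv kc i.

Local Notation eps := (@msubst 'F_2 k kc eps_f).

Lemma sigma_psi_eps p : p \in zvars_le 0 -> sigma p = psi (eps p).
Proof.
move=> p0; rewrite psiE -[RHS]/((msubst psi_f \o eps) p).
apply: eq_rmorph_F2poly p0 => i; rewrite inE addn0 => inn /=.
rewrite !msubstX -!psiE /sigma_f /eps_f; have nnn : (n <= nn)%N by rewrite leq_pmull.
case: ltnP => [iN|ni]; last by rewrite psi_Xv_high // ni.
have low j : (j < n)%N -> psi (Xv kc j) = Xv k j by move=> jn; apply/psi_Xv/(leq_trans jn).
case: eqP => _; first by rewrite low // ltn_predL.
by rewrite (rmorphD (@psi n)) /= !low // (leq_ltn_trans (leq_pred _) iN).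
Qed.

Lemma cycle_homologous (a : T) : dA a \in IA -> exists c b, a - psi c - dA b \in IA.
Proof.
move=> cyc; have /dK_cycle_homologous [r [b [r0 abE]]] : dK (tau a) \in IA.
  by rewrite dK_tau; apply: tau_IA.
exists (eps r), (sigma b); rewrite -sigma_psi_eps // -sigma_dK -{1}[a]tauK -!rmorphB.
exact: sigma_IA.
Qed.

(* [Xv kc t = 0] for [t > nn], so [phi] kills [h_{2n,j}] for [j > 0]. *)
Local Notation phi := (@msubst 'F_2 k kc (Xv kc)).

Lemma phi_rho : phi (rhoA n) = rhoC n.
Proof.
have zk j : (j < n)%N -> (nn + j < k)%N by rewrite kAE ltn_add2l.
have nnk : (nn < k)%N by rewrite -[nn]addn0 zk.
rewrite rhoAE rmorphD rmorph_sum msubst_Xv // big1_seq ?addr0 // => j /andP [_].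
rewrite mem_index_iota => /andP [j0 jn]; rewrite msubst_Xv ?zk // Xv_out //.
by rewrite /kC -addn1 leq_add2l.
Qed.

Lemma phi_psi (c : C) : phi (psi c) = c.
Proof.
rewrite -[RHS]/(idfun c) -[LHS]/((phi \o @psi n) c).
apply: eq_rmorph_F2poly (mvars_inT c) => i _ /=; rewrite psiE msubstX /psi_f.
have ik : (i < k)%N by rewrite kAE (leq_trans (ltn_ord i)) // /kC -addn1 leq_add2l.
case: ifP => [inn|/negbT]; first by rewrite /hA -divn_eq msubst_Xv // XvE.
rewrite -leqNgt => nni; rewrite phi_rho /rhoC -XvE; congr Xv.
by apply/eqP; rewrite eq_sym eqn_leq nni -ltnS ltn_ord.
Qed.

Lemma JC_hC2 t : (n <= t < nn)%N -> inJC (Xv kc t ^+ 2).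
Proof.
case/andP=> nt tnn; apply/in_ideal_gen; rewrite mem_cat; apply/orP; left.
rewrite (divn_eq t n); apply: (allpairs_f (fun o j => hC n o j ^+ 2)).
  by rewrite mem_iota divn_gt0 // nt add1n prednK // ltn_divLR.
by rewrite mem_iota ltn_mod.
Qed.

Lemma JC_rhoC2 : inJC (rhoC n ^+ 2).
Proof. by apply/in_ideal_gen; rewrite !mem_cat mem_seq1 eqxx orbT. Qed.

Lemma JC_hC2_diff j : (j < n)%N -> inJC (Xv kc j ^+ 2 - Xv kc n.-1 ^+ 2).
Proof.
move=> jn; apply/in_ideal_gen; rewrite !mem_cat; apply/orP; right; apply/orP; right.
by apply: (map_f (fun j => hC n 0 j ^+ 2 - hC n 0 n.-1 ^+ 2)); rewrite mem_iota.
Qed.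

Lemma JC_gensP g : g \in JC_gens n ->
  [\/ exists2 t, (n <= t < nn)%N & g = Xv kc t ^+ 2, g = rhoC n ^+ 2 |
      exists2 j, (j < n)%N & g = Xv kc j ^+ 2 - Xv kc n.-1 ^+ 2].
Proof.
rewrite !mem_cat mem_seq1 => /or3P [/allpairsP [[o j] /= [+ + ->]]|/eqP ->|/mapP [j]].
- rewrite !mem_iota add1n prednK // => /andP [o1 on] /andP [_ jn].
  by apply: Or31; exists (o * n + j) => //; apply/andP; split; nia.
- exact: Or32.
- by rewrite mem_iota => /andP [_ jn] ->; apply: Or33; exists j.
Qed.

Lemma phi_IA (x : T) : inIA x -> inJC (phi x).
Proof.
apply: in_ideal_rmorph => g /IA_gensP [t /andP [nt tk] ->].
rewrite rmorphXn msubst_Xv //; have [tnn|nnt] := ltnP t nn; first by apply: JC_hC2; rewrite nt.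
move: nnt; rewrite leq_eqVlt => /orP [/eqP <-|nnt]; first exact: JC_rhoC2.
by rewrite Xv_out ?expr0n //; apply: in_ideal0.
Qed.

Lemma phi_dA (b : T) : inJC (phi (dA b)).
Proof.
rewrite [dA b]/dA rmorph_sum; apply: in_ideal_sum => i nni; rewrite rmorphM; apply: in_idealM.
have nk : (n <= k)%N by rewrite kAE leq_addl.
have ilt : (i - nn < n)%N by rewrite ltn_subLR // -kAE.
have jlt : ((i - nn + n).-1 %% n < n)%N by rewrite ltn_mod.
rewrite /hA !mul0n !add0n rmorphD !rmorphXn !msubst_Xv ?(leq_trans _ nk) //.
set C2 := Xv kc n.-1 ^+ 2; set A := Xv kc _ ^+ 2; set B := Xv kc (i - nn) ^+ 2.
have -> : A + B = (A - C2) + (B - C2) by rewrite addrACA -opprD addrr_F2poly subr0.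
by apply: in_idealD; apply: JC_hC2_diff.
Qed.

Lemma boundaryA_IA (x : T) : x \in IA -> boundaryA x.
Proof. by move=> xIA; exists 0; rewrite raddf0 subr0; apply/inIAE. Qed.

Lemma boundaryAD (x y : T) : boundaryA x -> boundaryA y -> boundaryA (x + y).
Proof.
move=> [b1 h1] [b2 h2]; exists (b1 + b2); rewrite raddfD /= opprD addrACA.
exact: in_idealD.
Qed.

Lemma boundaryAMl (x y : T) : dA x = 0 -> boundaryA y -> boundaryA (x * y).
Proof.
move=> dx0 [b h]; exists (x * b); rewrite dAM dx0 mul0r add0r -mulrBr.
exact: in_idealM.
Qed.

Lemma psi_JC_gen g : g \in JC_gens n -> boundaryA (psi g).
Proof.
case/JC_gensP => [[t /andP [nt tnn] ->]|->|[j jn ->]].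
- by rewrite rmorphXn /= psi_Xv //; apply/boundaryA_IA/Xv2_IA.
- rewrite rmorphXn /= psi_rhoC /rhoA sqr_sum_F2poly; apply/boundaryA_IA/rpred_sum => j _.
  by apply: Xv2_IA; rewrite /hA (leq_trans (leq_pmull _ n_gt0)) ?leq_addr.
have nnn : (n <= nn)%N by rewrite leq_pmull.
rewrite rmorphB !rmorphXn /= !psi_Xv ?(leq_trans _ nnn) ?ltn_predL //.
exists (\sum_(j.+1 <= l < n) Xv k (nn + l)).
by rewrite dA_telescope // !subr_F2poly addrr_F2poly; apply: in_ideal0.
Qed.

Lemma psi_JC_boundary (c : C) : inJC c -> boundaryA (psi c).
Proof.
case/in_idealP => c' ->; rewrite rmorph_sum; apply: big_ind => [|x y|i _].
- by apply: boundaryA_IA; rewrite rpred0.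
- exact: boundaryAD.
by rewrite rmorphM; apply/boundaryAMl/psi_JC_gen/mem_nth; rewrite // dA_psi.
Qed.

Lemma psi_boundary_JC (c : C) : boundaryA (psi c) -> inJC c.
Proof.
case=> b h; rewrite -(phi_psi c) -(subrK (dA b) (psi c)) rmorphD.
by apply: in_idealD; [apply: phi_IA | apply: phi_dA].
Qed.

End E1.

Unset Implicit Arguments.

Theorem lemma5p2 (n : nat) (hn : (1 <= n)%N) :
  (forall c : F2poly (kC n), cycleA (psi c)) /\
  (forall c : F2poly (kC n), inJC c -> boundaryA (psi c)) /\
  (forall a : F2poly (kA n), cycleA a ->
     exists c : F2poly (kC n), boundaryA (a - psi c)) /\
  (forall c : F2poly (kC n), boundaryA (psi c) -> inJC c).
Proof.
split; [|split; [|split]].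
- by move=> c; rewrite /cycleA (dA_psi hn); apply: in_ideal0.
- exact: psi_JC_boundary.
- move=> a /(inIAE hn) cyc; have [c [b abE]] := cycle_homologous hn cyc.
  by exists c, b; apply/(inIAE hn).
- exact: psi_boundary_JC.
Qed.
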